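(* Let $\langle X_n, \pi^{n+1}_n : n\in\omega\rangle$ be an inverse system, let $X = X_\omega = \varprojlim_n X_n$ with projections $\pi^\omega_n : X\to X_n$, and for $m\le n<\omega$ let $\pi^n_m = \pi^{m+1}_m\circ\cdots\circ\pi^{n}_{n-1} : X_n\to X_m$ (with $\pi^n_n$ the identity). Let $p\in X$ and put $p_n = \pi^\omega_n(p)\in X_n$. Suppose: (A) for each $n$, $p_n$ is a weak $P_{\aleph_n}$-point in $X_n$; (B) for each $n$, $w(X_n) < \aleph_\omega$; (C) for each $n$, $(\pi^n_0)^{-1}(\{p_0\})$ is nowhere dense in $X_n$. Then $X$ is compact Hausdorff, $\chi(p,X) = w(X) = \aleph_\omega$, and for every regular cardinal $\kappa>\omega$ no $\kappa$-sequence of points of $X\setminus\{p\}$ converges to $p$.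
   Context: An inverse system is a sequence $\langle X_n, \pi^{n+1}_n : n\in\omega\rangle$ where each $X_n$ is a compact Hausdorff space and each $\pi^{n+1}_n$ is a continuous map from $X_{n+1}$ onto $X_n$; its inverse limit is $\{(x_n)_n\in\prod_n X_n : \pi^{n+1}_n(x_{n+1}) = x_n \text{ for all } n\}$ with the subspace product topology, and $\pi^\omega_n$ is the $n$-th coordinate projection. A point $y\in Y$ is a weak $P_\kappa$-point of $Y$ if $y$ is not in the closure of any subset of $Y\setminus\{y\}$ of cardinality less than $\kappa$ (trivial for $\kappa=\aleph_0$). $\chi(p,X)$ is the least size of a local base at $p$, $w(X)$ the least size of a base. A $\kappa$-sequence converges to $p$ if every neighborhood of $p$ contains a tail of it. *)

From HB Require Import structures.
From mathcomp Require Import all_boot all_order all_algebra.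
From mathcomp Require Import all_classical all_reals all_analysis.

Set Implicit Arguments.
Unset Strict Implicit.
Unset Printing Implicit Defensive.

Local Open Scope classical_set_scope.
Local Open Scope card_scope.

Definition strict_wellorder {T : Type} (S : set T) (lt : T -> T -> Prop) :=
  [/\ (forall x, S x -> ~ lt x x),
      (forall x y z, S x -> S y -> S z -> lt x y -> lt y z -> lt x z),
      (forall x y, S x -> S y -> [\/ x = y, lt x y | lt y x]) &
      (forall A : set T, A `<=` S -> A !=set0 ->
         exists2 m, A m & forall a, A a -> ~ lt a m)].

Definition segment {T : Type} (S : set T) (lt : T -> T -> Prop) (x : T) :=
  [set y | S y /\ lt y x].

(* le_aleph n S  <->  |S| <= aleph_n.
   |S| <= aleph_0 iff S countable;
   |S| <= aleph_(n+1) iff S admits a well-order all of whose proper initial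
   segments have cardinality <= aleph_n (i.e. order type <= omega_(n+1)). *)
Fixpoint le_aleph (n : nat) : forall T : Type, set T -> Prop :=
  match n with
  | 0 => fun T S => countable S
  | n'.+1 => fun T S => exists lt : T -> T -> Prop,
      strict_wellorder S lt /\ forall x, S x -> le_aleph n' (segment S lt x)
  end.

Definition lt_aleph (n : nat) {T : Type} (S : set T) : Prop :=
  match n with
  | 0 => finite_set S
  | n'.+1 => le_aleph n' S
  end.

Definition lt_aleph_omega {T : Type} (S : set T) : Prop :=
  exists n, le_aleph n S.

(* |S| <= aleph_omega : S admits a well-order all of whose proper initial
   segments have cardinality < aleph_omega (order type <= omega_omega). *)
Definition le_aleph_omega {T : Type} (S : set T) : Prop :=
  exists lt : T -> T -> Prop,
    strict_wellorder S lt /\ forall x, S x -> lt_aleph_omega (segment S lt x).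

Definition card_is_aleph_omega {T : Type} (S : set T) : Prop :=
  le_aleph_omega S /\ ~ lt_aleph_omega S.

(* A (well-ordered type representing a) regular cardinal kappa > omega:
   [lt] well-orders K, K is uncountable, K is an initial ordinal (every proper
   initial segment has smaller cardinality) and K is regular (every cofinal
   subset has cardinality |K|). *)
Definition regular_uncountable_cardinal {K : Type} (lt : K -> K -> Prop) :=
  [/\ strict_wellorder [set: K] lt,
      ~ countable [set: K],
      (forall k : K, ~ ([set: K] #<= [set j | lt j k])) &
      (forall A : set K, (forall k, exists2 a, A a & ~ lt a k) ->
          [set: K] #<= A)].

Definition weak_P_aleph_point {Y : topologicalType} (n : nat) (y : Y) :=
  forall A : set Y, A `<=` ~` [set y] -> lt_aleph n A -> ~ closure A y.

Definition local_base {Y : topologicalType} (p : Y) (B : set (set Y)) :=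
  B `<=` open_nbhs p /\ forall U, nbhs p U -> exists2 V, B V & V `<=` U.

Definition character_is_aleph_omega {Y : topologicalType} (p : Y) :=
  (exists2 B, local_base p B & le_aleph_omega B) /\
  (forall B, local_base p B -> ~ lt_aleph_omega B).

Definition weight_lt_aleph_omega (Y : topologicalType) :=
  exists2 B : set (set Y), basis B & lt_aleph_omega B.

Definition weight_is_aleph_omega (Y : topologicalType) :=
  (exists2 B : set (set Y), basis B & le_aleph_omega B) /\
  (forall B : set (set Y), basis B -> ~ lt_aleph_omega B).

Definition nowhere_dense {Y : topologicalType} (A : set Y) :=
  interior (closure A) = set0.

Definition wo_seq_converges {K : Type} (lt : K -> K -> Prop)
    {Y : topologicalType} (f : K -> Y) (p : Y) :=
  forall U, nbhs p U -> exists k0 : K, forall k, ~ lt k k0 -> U (f k).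

Definition invlim_set (X : nat -> topologicalType)
    (pi : forall n, X n.+1 -> X n) : set (prod_topology X) :=
  [set x | forall n, pi n (x n.+1) = x n].

Definition invlim (X : nat -> topologicalType)
    (pi : forall n, X n.+1 -> X n) : topologicalType :=
  set_type (invlim_set pi).

Definition invlim_proj (X : nat -> topologicalType)
    (pi : forall n, X n.+1 -> X n) (n : nat) (x : invlim pi) : X n :=
  (set_val x : prod_topology X) n.

Fixpoint bond0 (X : nat -> topologicalType) (pi : forall n, X n.+1 -> X n)
    (n : nat) : X n -> X 0 :=
  match n with
  | 0 => fun x => x
  | n'.+1 => fun x => @bond0 X pi n' (pi n' x)
  end.
Arguments bond0 {X} pi n _.

From HB Require Import structures.
From mathcomp Require Import all_boot all_order all_algebra.
From mathcomp Require Import all_classical all_reals all_analysis.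

(* Compactness and the Hausdorff property are inherited from the product, and
   pulling back bases of the X_n gives a basis of X of size at most aleph_omega.
   By (C) every neighbourhood of p contains a point whose 0-th coordinate differs
   from p_0; choosing one in each member of a local base of size aleph_n gives
   aleph_n points that avoid p_(n+1) at level n+1 but accumulate to it, against
   (A). For a kappa-sequence converging to
   p, regularity of kappa yields a coordinate n in which cofinally many terms
   differ from p_n: if kappa < aleph_omega this again contradicts (A) at a higher
   level, and otherwise the n-th coordinates converge in a space whose weight is
   below kappa, so they are eventually equal to p_n. *)

Set Implicit Arguments.
Unset Strict Implicit.
Unset Printing Implicit Defensive.

Local Open Scope classical_set_scope.
Local Open Scope card_scope.

Section StrictWellorder.
Variable T : Type.
Implicit Types (S : set T) (lt : T -> T -> Prop).

Lemma strict_wellorder0 lt : strict_wellorder set0 lt.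
Proof. by split=> // A A0 [a /A0]. Qed.

Lemma strict_wellorder_sub S S' lt :
  S' `<=` S -> strict_wellorder S lt -> strict_wellorder S' lt.
Proof.
move=> S'S [irr trans total wf]; split.
- by move=> x /S'S; apply: irr.
- by move=> x y z /S'S ? /S'S ? /S'S ?; apply: trans.
- by move=> x y /S'S ? /S'S ?; apply: total.
- by move=> A AS'; apply: wf => a /AS' /S'S.
Qed.

Lemma strict_wellorder_asym S lt x y : strict_wellorder S lt ->
  S x -> S y -> lt x y -> ~ lt y x.
Proof.
by move=> [irr trans _ _] Sx Sy xy yx; apply: (irr x) => //; apply: trans xy yx.
Qed.

Lemma segment_sub S S' lt x : S' `<=` S -> segment S' lt x `<=` segment S lt x.
Proof. by move=> S'S y [/S'S]. Qed.

End StrictWellorder.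

Lemma strict_wellorder_inj T U (S : set T) (S' : set U) lt (g : U -> T) :
  (forall y, S' y -> S (g y)) ->
  (forall y1 y2, S' y1 -> S' y2 -> g y1 = g y2 -> y1 = y2) ->
  strict_wellorder S lt -> strict_wellorder S' (fun y1 y2 => lt (g y1) (g y2)).
Proof.
move=> gS ginj [irr trans total wf]; split.
- by move=> y /gS; apply: irr.
- by move=> y1 y2 y3 /gS ? /gS ? /gS ?; apply: trans.
- move=> y1 y2 S'y1 S'y2; case: (total _ _ (gS _ S'y1) (gS _ S'y2)).
  + by move/ginj=> -> //; apply: Or31.
  + exact: Or32.
  + exact: Or33.
- move=> A AS' [a Aa].
  have gAS : g @` A `<=` S by move=> _ [b /AS' /gS Sgb <-].
  have [_ [b Ab <-] bmin] := wf _ gAS (ex_intro _ (g a) (ex_intro2 _ _ a Aa erefl)).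
  by exists b => // c Ac; apply: bmin; exists c.
Qed.

Lemma ltn_strict_wellorder : strict_wellorder [set: nat] (fun m n => (m < n)%N).
Proof.
split=> [n _|m n k _ _ _|m n _ _|A _ [n0 An0]]; first by rewrite ltnn.
- exact: ltn_trans.
- by case: ltngtP => mn; [exact: Or32 | exact: Or33 | exact: Or31].
- have exA : exists n, `[< A n >] by exists n0; apply/asboolP.
  case: (ex_minnP exA) => m /asboolP Am mmin; exists m => // n An.
  by apply/negP; rewrite -leqNgt; apply/mmin/asboolP.
Qed.

Lemma countable_strict_wellorder T (S : set T) : countable S ->
  exists lt, strict_wellorder S lt.
Proof.
move=> /countable_injP[g ginj]; eexists.
apply: strict_wellorder_inj ltn_strict_wellorder => //.
by move=> x y Sx Sy; apply: ginj; rewrite inE.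
Qed.

Lemma strict_wellorder_image T U (S : set T) lt (f : T -> U) :
  strict_wellorder S lt -> exists lt', strict_wellorder (f @` S) lt' /\
    forall y, (f @` S) y ->
      exists2 x, S x & segment (f @` S) lt' y `<=` f @` segment S lt x.
Proof.
move=> wo; have [->|/set0P[x0 Sx0]] := eqVneq S set0.
  rewrite image_set0; exists (fun _ _ => False).
  by split; [exact: strict_wellorder0 | move=> y []].
have /choice[g gP] : forall y, exists x, (f @` S) y -> S x /\ f x = y.
  move=> y; have [[x Sx <-]|nfy] := pselect ((f @` S) y); first by exists x.
  by exists x0.
exists (fun y1 y2 => lt (g y1) (g y2)); split.
  apply: strict_wellorder_inj wo; first by move=> y /gP[].
  by move=> y1 y2 /gP[_ e1] /gP[_ e2] e; rewrite -e1 -e2 e.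
move=> y /gP[Sgy _]; exists (g y) => // y' [/gP[Sgy' gy'] lty'].
by exists (g y').
Qed.

Section OrdinalSum.
Variables (T : Type) (F : nat -> set T) (ltF : nat -> T -> T -> Prop).
Hypothesis woF : forall i, strict_wellorder (F i) (ltF i).
Variable rank : T -> nat.
Hypothesis rankP : forall x i, F i x -> F (rank x) x /\ (rank x <= i)%N.

Definition sum_lt x y :=
  (rank x < rank y)%N \/ (rank x = rank y /\ ltF (rank x) x y).

Lemma sum_lt_wellorder : strict_wellorder (\bigcup_i F i) sum_lt.
Proof.
have Frank x : (\bigcup_i F i) x -> F (rank x) x by move=> [i _ /rankP[]].
split.
- move=> x /Frank Fx [|[_]]; first by rewrite ltnn.
  by case: (woF (rank x)) => irr _ _ _; apply: irr.
- move=> x y z /Frank Fx /Frank Fy /Frank Fz.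
  case=> [xy|[exy xy]] [yz|[eyz yz]].
  + by left; apply: ltn_trans xy yz.
  + by left; rewrite -eyz.
  + by left; rewrite exy.
  right; split; first by rewrite exy.
  case: (woF (rank x)) => _ trans _ _; apply: trans xy _ => //.
  * by rewrite exy.
  * by rewrite exy eyz.
  * by rewrite exy.
- move=> x y /Frank Fx /Frank Fy; case: (ltngtP (rank x) (rank y)) => [xy|yx|exy].
  + by apply: Or32; left.
  + by apply: Or33; left.
  + rewrite -exy in Fy; case: (woF (rank x)) => _ _ total _.
    case: (total x y Fx Fy) => [->|xy|yx]; first exact: Or31.
      by apply: Or32; right.
    by apply: Or33; right; rewrite -exy.
- move=> A AF [a0 Aa0].
  have exA : exists n, `[< exists2 a, A a & rank a = n >].
    by exists (rank a0); apply/asboolP; exists a0.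
  case: (ex_minnP exA) => m /asboolP[a Aa ram] mmin.
  have AmF : [set b | A b /\ rank b = m] `<=` F m by move=> b [/AF /Frank + <-].
  case: (woF m) => _ _ _ /(_ _ AmF (ex_intro _ a (conj Aa ram)))[b [Ab rbm] bmin].
  exists b => // c Ac [|[erc]].
    by rewrite rbm ltnNge mmin //; apply/asboolP; exists c.
  by rewrite erc rbm => cb; apply: (bmin c) => //; split; rewrite // erc.
Qed.

Lemma segment_sum_lt i y : F i y ->
  segment (\bigcup_i F i) sum_lt y `<=` \bigcup_(j < i) F j `|` segment (F i) (ltF i) y.
Proof.
move=> /rankP[Fry ryi] x [[k _ /rankP[Frx _]] [xy|[exy xy]]].
  by left; exists (rank x) => //=; apply: leq_trans xy ryi.
move: ryi; rewrite leq_eqVlt => /orP[/eqP eyi|ryi].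
  by right; split; rewrite -eyi -?exy.
by left; exists (rank x); rewrite //= exy.
Qed.

End OrdinalSum.

Lemma strict_wellorder_bigcup T (F : nat -> set T) (ltF : nat -> T -> T -> Prop) :
  (forall i, strict_wellorder (F i) (ltF i)) ->
  exists lt, strict_wellorder (\bigcup_i F i) lt /\ forall i y, F i y ->
    segment (\bigcup_i F i) lt y `<=` \bigcup_(j < i) F j `|` segment (F i) (ltF i) y.
Proof.
move=> woF.
have /choice[rank rankP] : forall x, exists r, forall i, F i x -> F r x /\ (r <= i)%N.
  move=> x; have [[i Fix]|nF] := pselect (exists i, F i x); last first.
    by exists 0%N => i Fix; case: nF; exists i.
  have exF : exists i, `[< F i x >] by exists i; apply/asboolP.
  case: (ex_minnP exF) => r /asboolP Frx rmin.
  by exists r => j Fjx; split => //; apply: rmin; apply/asboolP.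
exists (sum_lt ltF rank); split; first exact: sum_lt_wellorder.
exact: segment_sum_lt.
Qed.

Lemma strict_wellorder_setU T (S1 S2 : set T) lt1 lt2 :
  strict_wellorder S1 lt1 -> strict_wellorder S2 lt2 ->
  exists lt, [/\ strict_wellorder (S1 `|` S2) lt,
    forall y, S1 y -> segment (S1 `|` S2) lt y `<=` segment S1 lt1 y &
    forall y, S2 y -> segment (S1 `|` S2) lt y `<=` S1 `|` segment S2 lt2 y].
Proof.
move=> wo1 wo2; pose F i := if i is 0 then S1 else S2.
have FU : \bigcup_i F i = S1 `|` S2.
  apply/seteqP; split=> [x [[|i] _ Fx]|x [S1x|S2x]]; [by left|by right|by exists 0%N|].
  by exists 1%N.
have woF i : strict_wellorder (F i) (if i is 0 then lt1 else lt2) by case: i.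
have [lt [wo seg]] := strict_wellorder_bigcup woF; rewrite FU in wo seg.
exists lt; split => // y Sy x.
  by move=> /(seg 0%N _ Sy) [[j]|].
by move=> /(seg 1%N _ Sy) [[j /ltnSE]|]; [rewrite leqn0 => /eqP ->; left | right].
Qed.

Lemma le_aleph_sub n T (S S' : set T) : S' `<=` S -> le_aleph n S -> le_aleph n S'.
Proof.
elim: n S S' => [|n IH] S S' S'S /=; first exact/sub_countable/subset_card_le.
case=> lt [wo seg]; exists lt; split; first exact: strict_wellorder_sub wo.
by move=> x /[dup] /S'S Sx S'x; apply: IH (seg x Sx); apply: segment_sub.
Qed.

Lemma le_aleph_image n T U (S : set T) (f : T -> U) :
  le_aleph n S -> le_aleph n (f @` S).
Proof.
elim: n S => [|n IH] S /=; first exact/sub_countable/card_image_le.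
case=> lt [wo seg]; have [lt' [wo' seg']] := strict_wellorder_image f wo.
exists lt'; split => // y /seg'[x Sx sub].
exact: le_aleph_sub sub (IH _ (seg x Sx)).
Qed.

Lemma le_alephS n T (S : set T) : le_aleph n S -> le_aleph n.+1 S.
Proof.
elim: n S => [|n IH] S /=.
  move=> cS; have [lt wo] := countable_strict_wellorder cS.
  by exists lt; split => // x _; apply: sub_countable cS; apply: subset_card_le => y [].
by case=> lt [wo seg]; exists lt; split => // x /seg /IH.
Qed.

Lemma le_aleph_leq m n T (S : set T) : (m <= n)%N -> le_aleph m S -> le_aleph n S.
Proof.
move=> /subnK <-; elim: (n - m)%N => [//|k IH] Sm.
by rewrite addSn; apply/le_alephS/IH.
Qed.

Lemma le_aleph_set0 n T : le_aleph n (@set0 T).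
Proof.
case: n => [|n] /=; first exact: countable0.
by exists (fun _ _ => False); split=> [|x []]; exact: strict_wellorder0.
Qed.

Lemma le_aleph_card_le n T U (S : set T) (B : set U) :
  S #<= B -> le_aleph n B -> le_aleph n S.
Proof.
move/pfcard_geP => [-> | [f]] leB; first exact: le_aleph_set0.
exact: le_aleph_sub (@surj _ _ _ _ f) (le_aleph_image f leB).
Qed.

Lemma countable_setU T (S1 S2 : set T) :
  countable S1 -> countable S2 -> countable (S1 `|` S2).
Proof.
by move=> cS1 cS2; rewrite -bigcup2inE; apply: bigcup_countable => [|[|[|]]].
Qed.

(* With the countable [S2] placed first, an initial segment of a point of [S1]
   is a countable set plus an initial segment of [S1]. *)
Lemma le_aleph_setU_countable n T (S1 S2 : set T) :
  le_aleph n S1 -> countable S2 -> le_aleph n.+1 (S1 `|` S2).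
Proof.
elim: n S1 S2 => [|n IH] S1 S2 leS1 cS2; first exact/le_alephS/countable_setU.
case: leS1 => lt1 [wo1 seg1]; have [lt2 wo2] := countable_strict_wellorder cS2.
have [lt [wo seg2' seg1']] := strict_wellorder_setU wo2 wo1.
rewrite setUC; exists lt; split => // y [S2y|S1y].
  apply: le_aleph_sub (seg2' y S2y) _; apply: (@le_aleph_leq 0) => //.
  by apply: sub_countable cS2; apply: subset_card_le => z [].
by apply: le_aleph_sub (seg1' y S1y) _; rewrite setUC; apply: IH (seg1 y S1y) cS2.
Qed.

Lemma le_aleph_setU m n T (S1 S2 : set T) :
  le_aleph m S1 -> le_aleph n S2 -> le_aleph (m + n).+1 (S1 `|` S2).
Proof.
elim: n S1 S2 => [|n IH] S1 S2 leS1.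
  by rewrite addn0; apply: le_aleph_setU_countable.
case=> lt2 [wo2 seg2].
have [lt1 [wo1 seg1]] : le_aleph (m + n.+1).+1 S1.
  by apply: le_aleph_leq leS1; rewrite -addnS leq_addr.
have [lt [wo seg1' seg2']] := strict_wellorder_setU wo1 wo2.
exists lt; split => // y [S1y|S2y].
  exact: le_aleph_sub (seg1' y S1y) (seg1 y S1y).
by apply: le_aleph_sub (seg2' y S2y) _; rewrite addnS; apply: IH (seg2 y S2y).
Qed.

Lemma lt_aleph_omega_sub T (S S' : set T) :
  S' `<=` S -> lt_aleph_omega S -> lt_aleph_omega S'.
Proof. by move=> S'S [n leS]; exists n; apply: le_aleph_sub leS. Qed.

Lemma lt_aleph_omega_image T U (S : set T) (f : T -> U) :
  lt_aleph_omega S -> lt_aleph_omega (f @` S).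
Proof. by move=> [n leS]; exists n; apply: le_aleph_image. Qed.

Lemma lt_aleph_omega_setU T (S1 S2 : set T) :
  lt_aleph_omega S1 -> lt_aleph_omega S2 -> lt_aleph_omega (S1 `|` S2).
Proof. by move=> [m le1] [n le2]; exists (m + n).+1; apply: le_aleph_setU. Qed.

Lemma lt_aleph_omega_bigcup_ord T (F : nat -> set T) n :
  (forall i, lt_aleph_omega (F i)) -> lt_aleph_omega (\bigcup_(i < n) F i).
Proof.
move=> ltF; elim: n => [|n IH].
  by exists 0%N; apply: le_aleph_sub (le_aleph_set0 _ _) => x [].
apply: lt_aleph_omega_sub (lt_aleph_omega_setU IH (ltF n)) => x [i /ltnSE].
by rewrite leq_eqVlt => /orP[/eqP ->|ltin Fix]; [right | left; exists i].
Qed.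

Lemma le_aleph_omega_sub T (S S' : set T) :
  S' `<=` S -> le_aleph_omega S -> le_aleph_omega S'.
Proof.
move=> S'S [lt [wo seg]]; exists lt; split; first exact: strict_wellorder_sub wo.
by move=> x /[dup] /S'S /seg ltS S'x; apply: lt_aleph_omega_sub ltS; apply: segment_sub.
Qed.

Lemma le_aleph_omega_bigcup T (F : nat -> set T) :
  (forall i, lt_aleph_omega (F i)) -> le_aleph_omega (\bigcup_i F i).
Proof.
move=> ltF.
have /choice[ltF' woF] : forall i, exists lt, strict_wellorder (F i) lt /\
    forall x, F i x -> lt_aleph_omega (segment (F i) lt x).
  move=> i; have [n /le_alephS[lt [wo seg]]] := ltF i.
  by exists lt; split => // x /seg; exists n.
have [lt [wo seg]] := strict_wellorder_bigcup (fun i => (woF i).1).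
exists lt; split => // y [i _ Fiy]; apply: lt_aleph_omega_sub (seg i y Fiy) _.
by apply: lt_aleph_omega_setU; [exact: lt_aleph_omega_bigcup_ord | exact: (woF i).2].
Qed.

Lemma closure_image {T U : topologicalType} (f : T -> U) (E : set T) x :
  {for x, continuous f} -> closure E x -> closure (f @` E) (f x).
Proof.
move=> fx clE V /fx /clE[y [Ey Vfy]].
by exists (f y); split => //; exists y.
Qed.

Lemma hausdorff_nbhs_eq {T : topologicalType} (x y : T) : hausdorff_space T ->
  (forall V, nbhs x V -> V y) -> y = x.
Proof.
by move=> hT xy; apply: hT => A B /nbhs_singleton Ay /xy By; exists y.
Qed.

Lemma closed_equalizer {T U : topologicalType} (f g : T -> U) :
  hausdorff_space U -> continuous f -> continuous g -> closed [set x | f x = g x].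
Proof.
move=> hU cf cg x clx; apply: hU => A B fxA gxB.
have fA : nbhs x (f @^-1` A) by apply: cf.
have gB : nbhs x (g @^-1` B) by apply: cg.
have [y [/= fgy [fyA gyB]]] := clx _ (filterI fA gB).
by exists (g y); split; rewrite // -fgy.
Qed.

Lemma nowhere_dense_open {T : topologicalType} (A : set T) (V : set T) x :
  nowhere_dense A -> open V -> V x -> exists z, V z /\ ~ A z.
Proof.
move=> ndA oV Vx; apply: contrapT => noz.
have VA : V `<=` closure A.
  by move=> z Vz; apply: subset_closure; apply: contrapT => nAz; apply: noz; exists z.
have : interior (closure A) x by apply: filterS VA _; apply: open_nbhs_nbhs.
by rewrite ndA.
Qed.

Section SetType.
Variables (T : topologicalType) (A : set T).

Lemma set_type_hausdorff : hausdorff_space T -> hausdorff_space (set_type A).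
Proof.
move=> hT x y cxy; apply: val_inj; rewrite -!set_valE.
apply: hT => U V /initial_continuous xU /initial_continuous yV.
by have [z [Uz Vz]] := cxy _ _ xU yV; exists (set_val z).
Qed.

Lemma set_type_compact : compact A -> compact [set: set_type A].
Proof.
move=> cA F PF _.
have FA : (set_val @ F) A.
  apply: (@filterS _ F _ setT); last exact: filterT.
  by move=> z _ /=; have := set_valP z; rewrite set_valE.
have [q [Aq clq]] := cA _ (fmap_proper_filter set_val PF) FA.
exists (exist _ q (mem_set Aq)); split => // B C FB.
rewrite nbhsE => -[_ [[W oW <-] Wq] WC].
have /clq : nbhs q W by apply: open_nbhs_nbhs; split; rewrite // -set_valE.
move=> /(_ (set_val @` B)) [|_ [[b Bb <-] Wb]].
  by apply: (@filterS _ F _ B) FB => b Bb; exists b.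
by exists b; split => //; apply: WC.
Qed.

End SetType.

Section InverseLimit.
Variables (X : nat -> topologicalType) (pi : forall n, X n.+1 -> X n).
Arguments pi : clear implicits.
Hypothesis pi_cont : forall n, continuous (pi n).
Local Notation L := (invlim pi).
Local Notation proj := (@invlim_proj X pi).

Lemma invlim_proj_continuous n : continuous (proj n).
Proof.
move=> x; apply: (@continuous_comp _ (prod_topology X) _ set_val (fun f => f n)).
  exact: initial_continuous.
exact: proj_continuous.
Qed.

Lemma pi_invlim_proj (x : L) n : pi n (proj n.+1 x) = proj n x.
Proof. by rewrite /invlim_proj set_valE; apply: (set_valP x n). Qed.

Lemma bond0_invlim_proj (x : L) n : bond0 pi n (proj n x) = proj 0 x.
Proof. by elim: n => [//|n IH] /=; rewrite pi_invlim_proj. Qed.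

Lemma invlim_proj_inj (x y : L) : (forall n, proj n x = proj n y) -> x = y.
Proof.
move=> xy; apply: val_inj; rewrite -!set_valE.
exact: functional_extensionality_dep.
Qed.

Lemma invlim_proj_eq_leq (x y : L) m n : (m <= n)%N ->
  proj n x = proj n y -> proj m x = proj m y.
Proof.
move=> /subnK <-; elim: (n - m)%N => [//|k IH] exy.
by apply: IH; rewrite -pi_invlim_proj exy pi_invlim_proj.
Qed.

(* On threads, a condition on the N-th coordinate implies one on every later
   coordinate, so these sets form a filter, finer than the product
   neighbourhoods. *)
Definition cylinder_nbhs (x : L) : set_system (prod_topology X) :=
  [set W | exists N (V : set (X N)), [/\ open V, V (proj N x) &
     forall y, invlim_set pi y -> V (y N) -> W y]].

Lemma cylinder_nbhs_lift (x : L) W N (V : set (X N)) M : (N <= M)%N ->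
  [/\ open V, V (proj N x) & forall y, invlim_set pi y -> V (y N) -> W y] ->
  exists V' : set (X M), [/\ open V', V' (proj M x) &
     forall y, invlim_set pi y -> V' (y M) -> W y].
Proof.
move=> /subnK <-; elim: (M - N)%N => [|k IH] cylV; first by exists V.
have [V' [oV' V'x V'W]] := IH cylV; exists (pi (k + N) @^-1` V'); split.
- by apply: open_comp => // z _; apply: pi_cont.
- by rewrite /= pi_invlim_proj.
- by move=> y ty /= V'y; apply: V'W; rewrite // -ty.
Qed.

Lemma cylinder_nbhs_filter (x : L) : Filter (cylinder_nbhs x).
Proof.
split.
- by exists 0%N, setT; split => //; exact: openT.
- move=> W1 W2 [N1 [V1 cyl1]] [N2 [V2 cyl2]].
  have [V1' [oV1 V1x W1V]] := cylinder_nbhs_lift (leq_maxl N1 N2) cyl1.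
  have [V2' [oV2 V2x W2V]] := cylinder_nbhs_lift (leq_maxr N1 N2) cyl2.
  exists (maxn N1 N2), (V1' `&` V2'); split => //; first exact: openI.
  by move=> y ty [V1y V2y]; split; [apply: W1V | apply: W2V].
- move=> W W' WW' [N [V [oV Vx VW]]]; exists N, V; split => // y ty Vy.
  exact/WW'/VW.
Qed.

Lemma cylinder_nbhs_cvg (x : L) : cylinder_nbhs x --> (set_val x : prod_topology X).
Proof.
have Fx := cylinder_nbhs_filter x.
apply/cvg_sup => i U; rewrite nbhsE => -[V [[W oW <-] Vx] VU].
by exists i, W; split => // y _ Wy; apply: VU.
Qed.

Lemma invlim_nbhsP (x : L) (U : set L) : nbhs x U ->
  exists N (V : set (X N)), [/\ open V, V (proj N x) & proj N @^-1` V `<=` U].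
Proof.
rewrite nbhsE => -[_ [[W oW <-] Wx] WU].
have /cylinder_nbhs_cvg [N [V [oV Vx VW]]] : nbhs (set_val x : prod_topology X) W.
  by apply: open_nbhs_nbhs; split; rewrite // -set_valE.
exists N, V; split => // y Vy; apply: WU => /=; apply: VW => //.
by have := set_valP y; rewrite set_valE.
Qed.

Lemma invlim_basis (B : forall n, set (set (X n))) : (forall n, basis (B n)) ->
  basis (\bigcup_n [set proj n @^-1` V | V in B n]).
Proof.
move=> bB; split.
  move=> _ [n _ [V BV <-]]; apply: open_comp.
    by move=> x _; apply: invlim_proj_continuous.
  by case: (bB n) => + _; apply.
move=> x U /invlim_nbhsP[N [V [oV Vx VU]]].
have [V' [BV' V'x] V'V] := (bB N).2 (proj N x) V (open_nbhs_nbhs (conj oV Vx)).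
exists (proj N @^-1` V'); first by split => //; exists N => //; exists V'.
by move=> y /V'V /VU.
Qed.

Section CompactHausdorff.
Hypothesis X_hausdorff : forall n, hausdorff_space (X n).

Lemma invlim_set_closed : closed (invlim_set pi).
Proof.
have -> : invlim_set pi = \bigcap_n [set y : prod_topology X | pi n (y n.+1) = y n].
  by apply/seteqP; split => [y ty n _|y ty n]; apply: ty.
apply: closed_bigI => n _; apply: closed_equalizer => //.
  by move=> y; apply: continuous_comp; [exact: proj_continuous | exact: pi_cont].
exact: proj_continuous.
Qed.

Lemma invlim_hausdorff : hausdorff_space L.
Proof. exact/set_type_hausdorff/hausdorff_product. Qed.

Lemma invlim_compact : (forall n, compact [set: X n]) -> compact [set: L].
Proof.
move=> X_compact; apply/set_type_compact.
exact: subclosed_compact invlim_set_closed (tychonoff X_compact) _.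
Qed.

End CompactHausdorff.

Section Threads.
Variable d : prod_topology X.
Hypothesis pi_surj : forall n (y : X n), exists x : X n.+1, pi n x = y.
Arguments pi_surj : clear implicits.

(* [descend a] lists the images of [a : X m] in the [X i] for [i <= m]; above
   [m] it keeps the coordinates of [d]. *)
Fixpoint descend m : X m -> prod_topology X :=
  match m with
  | 0 => fun a => dfwith d 0 a
  | m.+1 => fun a => dfwith (descend (pi m a)) m.+1 a
  end.

Lemma descend_self m (a : X m) : descend a m = a.
Proof. by case: m a => [|m] a /=; rewrite dfwithin. Qed.

Lemma descendS m (a : X m.+1) i : (i <= m)%N -> descend a i = descend (pi m a) i.
Proof. by move=> im /=; rewrite dfwithout // gtn_eqF. Qed.

Lemma pi_descend m (a : X m) i : (i < m)%N -> pi i (descend a i.+1) = descend a i.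
Proof.
elim: m a => [//|m IH] a; rewrite ltnS leq_eqVlt => /orP[/eqP ->|im].
  by rewrite descend_self descendS // descend_self.
by rewrite !descendS // ?IH // ltnW.
Qed.

Lemma invlim_proj_surj N (y : X N) : exists x : L, proj N x = y.
Proof.
pose lift n := projT1 (choice (pi_surj n)).
have liftK n z : pi n (lift n z) = z := projT2 (choice (pi_surj n)) z.
pose fix ascend k : X (k + N) :=
  if k is k.+1 then lift (k + N) (ascend k) else y.
pose x : prod_topology X := fun i => descend (ascend i) i.
have tx : invlim_set pi x.
  move=> i; rewrite /x pi_descend ?ltnS ?leq_addr //.
  by rewrite [ascend i.+1]/= (descendS _ (leq_addr N i)) liftK.
exists (exist _ x (mem_set tx)); rewrite /invlim_proj set_valE /= /x.
suff ascendN k : descend (ascend k) N = y by [].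
elim: k => [|k IH]; first exact: descend_self.
by rewrite [ascend _]/= descendS ?leq_addl // liftK.
Qed.

End Threads.

End InverseLimit.

Lemma basis_local_base {T : topologicalType} (B : set (set T)) x :
  basis B -> local_base x [set U | B U /\ U x].
Proof.
move=> [Bo Bx]; split; first by move=> U [BU Ux]; split => //; apply: Bo.
by move=> U /Bx[V [BV Vx] VU]; exists V.
Qed.

Section WellOrderedSequences.
Variables (K : Type) (lt : K -> K -> Prop).

Definition cofinal (A : set K) := forall k, exists2 a, A a & ~ lt a k.

Lemma not_cofinal_bounded A : ~ cofinal A -> exists k, forall a, A a -> lt a k.
Proof.
move=> ncof; apply: contrapT => nb; apply: ncof => k; apply: contrapT => nk.
by apply: nb; exists k => a Aa; apply: contrapT => nl; apply: nk; exists a.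
Qed.

(* The bounds of the non-cofinal pieces would form a countable cofinal set. *)
Lemma regular_cover_cofinal (A : nat -> set K) : regular_uncountable_cardinal lt ->
  (forall k, exists n, A n k) -> exists n, cofinal (A n).
Proof.
move=> [wo unc _ reg] cover; apply: contrapT => ncof.
have /choice[b bP] : forall n, exists b, forall a, A n a -> lt a b.
  by move=> n; apply: not_cofinal_bounded => cof; apply: ncof; exists n.
have cofb : cofinal (range b).
  move=> k; have [n Ank] := cover k; exists (b n); first by exists n.
  exact: strict_wellorder_asym wo _ _ (bP n k Ank).
by apply/unc/(sub_countable (reg _ cofb)); apply: sub_countable (card_image_le _ _) _.
Qed.

Section Convergence.
Variables (Y : topologicalType) (f : K -> Y) (z : Y).
Hypothesis f_cvg : wo_seq_converges lt f z.

Lemma wo_seq_converges_comp (Z : topologicalType) (g : Y -> Z) :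
  {for z, continuous g} -> wo_seq_converges lt (g \o f) (g z).
Proof. by move=> gz U /gz /f_cvg. Qed.

Lemma closure_cofinal_image A : cofinal A -> closure (f @` A) z.
Proof.
move=> cofA U /f_cvg[k0 k0U]; have [a Aa nak0] := cofA k0.
by exists (f a); split; [exists a | apply: k0U].
Qed.

(* Each member of a small local base is entered before some index, and by
   regularity these indices are bounded. *)
Lemma regular_wo_seq_eventually_eq (B : set (set Y)) :
  regular_uncountable_cardinal lt -> ~ lt_aleph_omega [set: K] ->
  hausdorff_space Y -> local_base z B -> lt_aleph_omega B ->
  exists k0, forall k, ~ lt k k0 -> f k = z.
Proof.
move=> [wo unc _ reg] largeK hY [Bo Bz] [j leB].
have /set0P[k0 _] : [set: K] != set0.
  by apply/eqP => K0; apply: unc; rewrite K0; exact: countable0.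
have /choice[tail tailP] : forall V, exists k, B V -> forall k', ~ lt k' k -> V (f k').
  move=> V; have [BV|nBV] := pselect (B V); last by exists k0 => /nBV.
  by have [k kP] := f_cvg (open_nbhs_nbhs (Bo V BV)); exists k.
have [k1 k1P] : exists k1, forall c, (tail @` B) c -> lt c k1.
  apply: not_cofinal_bounded => cof; apply: largeK; exists j.
  exact: le_aleph_card_le (reg _ cof) (le_aleph_image tail leB).
exists k1 => k nk1; apply: hausdorff_nbhs_eq hY _ => V /Bz[W BW WV].
apply/WV/(tailP W BW) => ktail; apply: nk1.
case: wo => _ trans _ _; apply: (trans _ (tail W)) => //.
by apply: k1P; exists W.
Qed.

End Convergence.
End WellOrderedSequences.

Section PointOfCharacterAlephOmega.
Variables (X : nat -> topologicalType) (pi : forall n, X n.+1 -> X n).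
Arguments pi : clear implicits.
Hypothesis X_hausdorff : forall n, hausdorff_space (X n).
Hypothesis pi_cont : forall n, continuous (pi n).
Hypothesis pi_surj : forall n (y : X n), exists x : X n.+1, pi n x = y.
Variable p : invlim pi.
Hypothesis hA : forall n, weak_P_aleph_point n (invlim_proj n p).
Hypothesis hB : forall n, weight_lt_aleph_omega (X n).
Hypothesis hC : forall n, nowhere_dense (bond0 pi n @^-1` [set invlim_proj 0 p]).
Local Notation L := (invlim pi).
Local Notation proj := (@invlim_proj X pi).

Lemma small_set_not_near_p (E : set L) m n : (n <= m.+1)%N -> le_aleph m E ->
  (forall x, E x -> proj n x <> proj n p) -> ~ closure E p.
Proof.
move=> nm leE Ep clE; apply: (@hA m.+1 (proj m.+1 @` E)).
- by move=> _ [x Ex <-] /= exp; apply: (Ep x Ex); apply: invlim_proj_eq_leq exp.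
- exact: le_aleph_image.
- exact: closure_image (@invlim_proj_continuous _ _ m.+1 p) clE.
Qed.

Lemma nbhs_escapes_fiber (U : set L) : nbhs p U ->
  exists2 x, U x & proj 0 x <> proj 0 p.
Proof.
move=> /(invlim_nbhsP pi_cont)[N [V [oV Vp VU]]].
have [z [Vz /= zp]] := nowhere_dense_open (hC N) oV Vp.
have [x xz] := invlim_proj_surj (set_val p) pi_surj z.
by exists x; [apply: VU; rewrite /= xz | rewrite -(bond0_invlim_proj x N) xz].
Qed.

Lemma local_base_not_lt_aleph_omega (B : set (set L)) :
  local_base p B -> ~ lt_aleph_omega B.
Proof.
move=> [Bo Bp] [n leB].
have /choice[x xP] : forall U, exists x, B U -> U x /\ proj 0 x <> proj 0 p.
  move=> U; have [BU|nBU] := pselect (B U); last by exists p => /nBU.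
  by have [x Ux xp] := nbhs_escapes_fiber (open_nbhs_nbhs (Bo U BU)); exists x.
apply: (@small_set_not_near_p (x @` B) n 0) => //.
- exact: le_aleph_image.
- by move=> _ [U BU <-]; case: (xP U BU).
- move=> W /Bp[U BU UW]; exists (x U); split; first by exists U.
  exact/UW/(xP U BU).1.
Qed.

Lemma invlim_basis_le_aleph_omega :
  exists2 BB : set (set L), basis BB & le_aleph_omega BB.
Proof.
have Bn n : {B : set (set (X n)) | basis B & lt_aleph_omega B} by apply/cid2/hB.
exists (\bigcup_n [set proj n @^-1` V | V in s2val (Bn n)]).
  by apply: invlim_basis => // n; case: (Bn n).
by apply: le_aleph_omega_bigcup => n; apply: lt_aleph_omega_image; case: (Bn n).
Qed.

Lemma invlim_character : character_is_aleph_omega p.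
Proof.
split; last exact: local_base_not_lt_aleph_omega.
have [BB bBB leBB] := invlim_basis_le_aleph_omega.
exists [set U | BB U /\ U p]; first exact: basis_local_base.
by apply: le_aleph_omega_sub leBB => U [].
Qed.

Lemma invlim_weight : weight_is_aleph_omega L.
Proof.
split; first exact: invlim_basis_le_aleph_omega.
move=> B bB ltB; apply: (local_base_not_lt_aleph_omega (basis_local_base p bB)).
by apply: lt_aleph_omega_sub ltB => U [].
Qed.

Lemma invlim_no_regular_wo_seq_cvg (K : Type) (lt : K -> K -> Prop) :
  regular_uncountable_cardinal lt -> forall f : K -> L, (forall k, f k <> p) ->
  ~ wo_seq_converges lt f p.
Proof.
move=> reg f fp cvg.
pose A n := [set k | proj n (f k) <> proj n p].
have [n cofA] : exists n, cofinal lt (A n).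
  apply: regular_cover_cofinal => // k; apply: contrapT => nk; apply: (fp k).
  by apply: invlim_proj_inj => n; apply: contrapT => ne; apply: nk; exists n.
have [[j leK]|largeK] := pselect (lt_aleph_omega [set: K]).
  apply: (@small_set_not_near_p (f @` A n) (n + j) n).
  - by rewrite ltnW // ltnS leq_addr.
  - apply/le_aleph_image/(le_aleph_sub (subsetT _)).
    exact: le_aleph_leq (leq_addl n j) leK.
  - by move=> _ [k Ak <-].
  - exact: (closure_cofinal_image cvg cofA).
have [B bB ltB] := hB n.
have ltBp : lt_aleph_omega [set V | B V /\ V (proj n p)].
  by apply: lt_aleph_omega_sub ltB => V [].
have [k0 k0p] := regular_wo_seq_eventually_eq
  (wo_seq_converges_comp cvg (@invlim_proj_continuous _ _ n p)) reg largeK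
  (@X_hausdorff n) (basis_local_base (proj n p) bB) ltBp.
by have [a Aa nak0] := cofA k0; apply: Aa; apply: k0p.
Qed.

End PointOfCharacterAlephOmega.

Theorem lemma2 (X : nat -> topologicalType) (pi : forall n, X n.+1 -> X n)
  (X_compact : forall n, compact [set: X n])
  (X_hausdorff : forall n, hausdorff_space (X n))
  (pi_cont : forall n, continuous (pi n))
  (pi_surj : forall n (y : X n), exists x : X n.+1, pi n x = y)
  (p : invlim pi)
  (hA : forall n, weak_P_aleph_point n (invlim_proj n p))
  (hB : forall n, weight_lt_aleph_omega (X n))
  (hC : forall n, nowhere_dense (bond0 pi n @^-1` [set invlim_proj 0 p])) :
  [/\ compact [set: invlim pi], hausdorff_space (invlim pi),
      character_is_aleph_omega p, weight_is_aleph_omega (invlim pi) &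
      forall (K : Type) (lt : K -> K -> Prop),
        regular_uncountable_cardinal lt ->
        forall f : K -> invlim pi, (forall k, f k <> p) ->
          ~ wo_seq_converges lt f p].
Proof.
split.
- exact: invlim_compact.
- exact: invlim_hausdorff.
- exact: invlim_character.
- exact: invlim_weight.
- exact: invlim_no_regular_wo_seq_cvg.
Qed.
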